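(* Let $(F,\mathrm{Frob})\in\mathcal{S}$, $a\in F^n$ and $A\subseteq F$, and suppose $\dim_{rk}(a/A)=k$. Then there is a finite set $\{P_1(x),\dots,P_m(x)\}$ of difference polynomials with parameters in $A$ such that $(F,\mathrm{Frob})\models\bigwedge_{i\le m}P_i(a)=0$ and $\dim_{rk}\big(\bigwedge_{i\le m}P_i(x)=0\big)=k$.
   Context: $\mathbb{P}$ = primes, $\mathrm{Frob}_p:x\mapsto x^p$, $\mathcal{L}_\sigma$ = language of rings plus unary $\sigma$. For a parameter-free $\mathcal{L}_\sigma$-formula $\varphi$ and prime $p$, $\varphi_p$ replaces each $\sigma(t)$ by $t^p$. For each ring formula $\psi(x,y)$, $|x|=n$, fix $C_\psi>0$ and finite $D_\psi\subseteq\{0,..,n\}\times\mathbb{R}^{>0}$ such that for all finite fields $\mathbb{F}_q$ and $a$ with $\psi(\mathbb{F}_q^n,a)\ne\emptyset$ some $(d,\mu)\in D_\psi$ has $\big||\psi(\mathbb{F}_q^n,a)|-\mu q^d\big|\le C_\psi q^{d-1/2}$; $E_\psi=\{\mu:(d,\mu)\in D_\psi\}$; $N^p_\varphi=\max\{\mu,1/\mu,2\log_p(2C_{\varphi_p}/\mu):\mu\in E_{\varphi_p}\}$; $f(\ell,p)=\max\{N^p_\varphi:|\varphi|\le\ell\}$. $\mathcal{S}$ = ultraproducts $\prod_p(\mathbb{F}_{p^{k_p}},\mathrm{Frob}_p)/\mathcal{U}$, $\mathcal{U}$ non-principal on $\mathbb{P}$, $k_p\ge f(p,p)$. With $(\tilde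 F,\mathrm{Frob})=\prod_p(\tilde{\mathbb{F}}_p,\mathrm{Frob}_p)/\mathcal{U}$ (a model of ACFA containing $F$), $\dim_{rk}(a/A)$ is the transformal transcendence degree of $a$ over the difference field generated by $A$, and for a formula $\pi$ over $A$, $\dim_{rk}(\pi)=\max\{\dim_{rk}(c/A):c\models\pi\}$ with realizations in a saturated elementary extension of $(\tilde F,\mathrm{Frob})$. *)

From Stdlib Require Import Reals ClassicalDescription.
From HB Require Import structures.
From mathcomp Require Import all_boot all_order all_algebra all_field.
Set Implicit Arguments.
Unset Strict Implicit.
Unset Printing Implicit Defensive.
Import GRing.Theory.

(* L_sigma-structures: a carrier with an interpretation of equality     *)
(* (a relation, so that ultraproducts can be taken as setoids), of the  *)
(* ring operations and of the unary symbol sigma.                      *)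
Record str := Str {
  car :> Type;
  eqr : car -> car -> Prop;
  zr : car; on : car;
  ad : car -> car -> car; ml : car -> car -> car;
  op : car -> car; sg : car -> car }.

Definition ring_str (T : nzRingType) (s : T -> T) : str :=
  @Str T (@eq T) 0%R 1%R (@GRing.add T) (@GRing.mul T) (@GRing.opp T) s.

Definition ultra (I : Type) (U : (I -> Prop) -> Prop) (M : I -> str) : str :=
  @Str (forall i, M i)
    (fun x y => U (fun i => eqr (x i) (y i)))
    (fun i => zr (M i)) (fun i => on (M i))
    (fun x y i => ad (x i) (y i)) (fun x y i => ml (x i) (y i))
    (fun x i => op (x i)) (fun x i => sg (x i)).

Definition ultrafilter (I : Type) (U : (I -> Prop) -> Prop) : Prop :=
  U (fun _ => True) /\ ~ U (fun _ => False) /\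
  (forall X Y : I -> Prop, U X -> (forall i, X i -> Y i) -> U Y) /\
  (forall X Y : I -> Prop, U X -> U Y -> U (fun i => X i /\ Y i)) /\
  (forall X : I -> Prop, U X \/ U (fun i => ~ X i)).

Definition nonprincipal (I : Type) (U : (I -> Prop) -> Prop) : Prop :=
  forall i0 : I, ~ U (fun i => i = i0).

(* Syntax of L_sigma: terms (with constants from X, i.e. parameters)   *)
Inductive term (X : Type) : Type :=
| Var of nat | Cst of X | Zero | One
| Add of term X & term X | Mul of term X & term X
| Opp of term X | Sig of term X.
Arguments Var {X}. Arguments Zero {X}. Arguments One {X}.

Inductive form (X : Type) : Type :=
| FEq of term X & term X
| FNeg of form X
| FAnd of form X & form X
| FEx of nat & form X.

Definition upd (T : Type) (v : nat -> T) (i : nat) (y : T) : nat -> T :=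
  fun j => if j == i then y else v j.

Fixpoint evalt (M : str) (X : Type) (cs : X -> M) (v : nat -> M) (t : term X)
  : M :=
  match t with
  | Var i => v i
  | Cst x => cs x
  | Zero => zr M
  | One => on M
  | Add s u => ad (evalt cs v s) (evalt cs v u)
  | Mul s u => ml (evalt cs v s) (evalt cs v u)
  | Opp s => op (evalt cs v s)
  | Sig s => sg (evalt cs v s)
  end.

Fixpoint sat (M : str) (X : Type) (cs : X -> M) (v : nat -> M) (f : form X)
  : Prop :=
  match f with
  | FEq s u => eqr (evalt cs v s) (evalt cs v u)
  | FNeg g => ~ sat cs v g
  | FAnd g h => sat cs v g /\ sat cs v h
  | FEx i g => exists y : M, sat cs (upd v i y) g
  end.

Definition form0 := form Empty_set.
Definition nocst (M : Type) : Empty_set -> M := fun e => match e with end.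

(* Length of a formula; variable v_i counts as i+1 symbols (so that there *)
(* are finitely many formulas of bounded length).                        *)
Fixpoint tsize (X : Type) (t : term X) : nat :=
  match t with
  | Var i => i.+1
  | Cst _ | Zero | One => 1
  | Add s u | Mul s u => (tsize s + tsize u).+1
  | Opp s | Sig s => (tsize s).+1
  end.
Fixpoint fsize (X : Type) (f : form X) : nat :=
  match f with
  | FEq s u => (tsize s + tsize u).+1
  | FNeg g => (fsize g).+1
  | FAnd g h => (fsize g + fsize h).+1
  | FEx i g => (i.+1 + fsize g).+1
  end.

Fixpoint tsfree (X : Type) (t : term X) : Prop :=
  match t with
  | Add s u | Mul s u => tsfree s /\ tsfree u
  | Opp s => tsfree s
  | Sig _ => False
  | _ => True
  end.
Fixpoint fsfree (X : Type) (f : form X) : Prop :=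
  match f with
  | FEq s u => tsfree s /\ tsfree u
  | FNeg g => fsfree g
  | FAnd g h => fsfree g /\ fsfree h
  | FEx _ g => fsfree g
  end.

Fixpoint tpow (X : Type) (t : term X) (m : nat) : term X :=
  match m with 0 => One | m'.+1 => Mul t (tpow t m') end.
Fixpoint ttrans (X : Type) (p : nat) (t : term X) : term X :=
  match t with
  | Var i => Var i | Cst x => Cst x | Zero => Zero | One => One
  | Add s u => Add (ttrans p s) (ttrans p u)
  | Mul s u => Mul (ttrans p s) (ttrans p u)
  | Opp s => Opp (ttrans p s)
  | Sig s => tpow (ttrans p s) p
  end.
Fixpoint ftrans (X : Type) (p : nat) (f : form X) : form X :=
  match f with
  | FEq s u => FEq (ttrans p s) (ttrans p u)
  | FNeg g => FNeg (ftrans p g)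
  | FAnd g h => FAnd (ftrans p g) (ftrans p h)
  | FEx i g => FEx i (ftrans p g)
  end.

Definition join (T : Type) (n : nat) (x : 'I_n -> T) (y : nat -> T) : nat -> T :=
  fun i => odflt (y i) (omap x (insub i : option 'I_n)).

Definition decP (P : Prop) : bool :=
  if excluded_middle_informative P then true else false.

Definition count_sol (F : finFieldType) (n : nat) (y : nat -> F) (psi : form0)
  : nat :=
  #|[set x : {ffun 'I_n -> F} |
      decP (sat (M := @ring_str F id) (nocst _) (join x y) psi)]|.

Definition CDM (C : form0 -> nat -> R) (D : form0 -> nat -> list (nat * R))
  : Prop :=
  forall (psi : form0) (n : nat), fsfree psi ->
  Rlt R0 (C psi n) /\
  (forall dm, List.In dm (D psi n) -> (dm.1 <= n)%N /\ Rlt R0 dm.2) /\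
  forall (F : finFieldType) (y : nat -> F),
    (0 < count_sol n y psi)%N ->
    exists dm, List.In dm (D psi n) /\
      Rle (Rabs (Rminus (INR (count_sol n y psi))
                        (Rmult dm.2 (pow (INR #|F|) dm.1))))
          (Rdiv (Rmult (C psi n) (pow (INR #|F|) dm.1)) (sqrt (INR #|F|))).

(* kp >= f(p,p) = max { N^p_phi : |phi| <= p } *)
Definition f_bound (C : form0 -> nat -> R) (D : form0 -> nat -> list (nat * R))
  (p kp : nat) : Prop :=
  forall (phi : form0) (n : nat), (fsize phi + n <= p)%N ->
  forall dm, List.In dm (D (ftrans p phi) n) ->
    Rle dm.2 (INR kp) /\ Rle (Rinv dm.2) (INR kp) /\
    Rle (Rmult (INR 2) (Rdiv (ln (Rdiv (Rmult (INR 2) (C (ftrans p phi) n)) dm.2))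
                             (ln (INR p))))
        (INR kp).

Definition prime_t := {p : nat | prime p}.

Definition alg_closure_Fp (K : closedFieldType) (p : nat) : Prop :=
  (p%:R == 0 :> K)%R /\
  forall x : K, exists q : {poly K}, (q != 0)%R /\
    (forall i, exists m : nat, (q`_i = m%:R)%R) /\ root q x.

Definition Fstr (U : (prime_t -> Prop) -> Prop) (Fp : prime_t -> finFieldType)
  : str := ultra U (fun p => @ring_str (Fp p) (fun x => (x ^+ proj1_sig p)%R)).

Definition Ftstr (U : (prime_t -> Prop) -> Prop) (Kp : prime_t -> closedFieldType)
  : str := ultra U (fun p => @ring_str (Kp p) (fun x => (x ^+ proj1_sig p)%R)).

Definition iota_u (U : (prime_t -> Prop) -> Prop) (Fp : prime_t -> finFieldType)
  (Kp : prime_t -> closedFieldType) (iota : forall p, {rmorphism Fp p -> Kp p})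
  : Fstr U Fp -> Ftstr U Kp := fun x p => iota p (x p).

Definition dsubfield (M : str) (S : M -> Prop) : Prop :=
  (forall x y, eqr x y -> S x -> S y) /\ S (zr M) /\ S (on M) /\
  (forall x y, S x -> S y -> S (ad x y)) /\ (forall x, S x -> S (op x)) /\
  (forall x y, S x -> S y -> S (ml x y)) /\
  (forall x y, S x -> ~ eqr x (zr M) -> eqr (ml x y) (on M) -> S y) /\
  (forall x, S x -> S (sg x)) /\
  (forall x y, S x -> eqr (sg y) x -> S y).

Definition dfield_gen (M : str) (B : M -> Prop) (x : M) : Prop :=
  forall S, dsubfield S -> (forall b, B b -> S b) -> S x.

Definition pw (M : str) (y : M) (e : nat) : M := iter e (ml y) (on M).
Definition monom (M : str) (ys : seq M) (es : seq nat) : M :=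
  foldr (fun ye acc => ml (pw ye.1 ye.2) acc) (on M) (zip ys es).
(* a polynomial in the variables ys: list of (coefficient, exponent vector) *)
Definition peval (M : str) (ys : seq M) (P : seq (M * seq nat)) : M :=
  foldr (fun ce acc => ad (ml ce.1 (monom ys ce.2)) acc) (zr M) P.

Definition alg_dep (M : str) (K : M -> Prop) (ys : seq M) : Prop :=
  exists P : seq (M * seq nat),
    (forall ce, List.In ce P -> K ce.1 /\ size ce.2 = size ys) /\
    uniq (map snd P) /\
    (exists ce, List.In ce P /\ ~ eqr ce.1 (zr M)) /\
    eqr (peval ys P) (zr M).

Definition tindep (M : str) (K : M -> Prop) (n : nat) (c : 'I_n -> M)
  (J : {set 'I_n}) : Prop :=
  forall N : nat,
    ~ alg_dep K [seq iter j (@sg M) (c i) | i <- enum J, j <- iota 0 N].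

Definition is_trdeg (M : str) (B : M -> Prop) (n : nat) (c : 'I_n -> M)
  (k : nat) : Prop :=
  (exists J : {set 'I_n}, #|J| = k /\ tindep (dfield_gen B) c J) /\
  (forall J : {set 'I_n}, tindep (dfield_gen B) c J -> (#|J| <= k)%N).

Definition elem_ext (N M : str) (h : N -> M) : Prop :=
  forall (phi : form0) (v : nat -> N),
    sat (nocst N) v phi <-> sat (nocst M) (fun i => h (v i)) phi.

Definition realizes (M : str) (X : Type) (cs : X -> M) (n : nat)
  (Ps : list (term X)) (c : 'I_n -> M) : Prop :=
  forall P, List.In P Ps -> eqr (evalt cs (join c (fun _ => zr M)) P) (zr M).

Fixpoint tcsts_in (X : Type) (A : X -> Prop) (t : term X) : Prop :=
  match t with
  | Cst x => A x
  | Add s u | Mul s u => tcsts_in A s /\ tcsts_in A u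
  | Opp s | Sig s => tcsts_in A s
  | _ => True
  end.
Fixpoint tvars_lt (X : Type) (n : nat) (t : term X) : Prop :=
  match t with
  | Var i => (i < n)%N
  | Add s u | Mul s u => tvars_lt n s /\ tvars_lt n u
  | Opp s | Sig s => tvars_lt n s
  | _ => True
  end.

(* dim_rk( /\_{P in Ps} P(x) = 0 ) = k, where the parameters X are placed in
   the structure N by cs and A is the parameter set: the maximum of the
   transformal transcendence degrees over A of realizations in elementary
   extensions of N is k. *)
Definition dim_rk_eq (N : str) (X : Type) (cs : X -> N) (A : X -> Prop)
  (n : nat) (Ps : list (term X)) (k : nat) : Prop :=
  (exists (M : str) (h : N -> M) (c : 'I_n -> M),
     elem_ext h /\ realizes (fun x => h (cs x)) Ps c /\
     is_trdeg (fun z => exists x, A x /\ z = h (cs x)) c k) /\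
  (forall (M : str) (h : N -> M) (c : 'I_n -> M),
     elem_ext h -> realizes (fun x => h (cs x)) Ps c ->
     forall J : {set 'I_n},
       tindep (dfield_gen (fun z => exists x, A x /\ z = h (cs x))) c J ->
       (#|J| <= k)%N).

From Stdlib Require Import Reals ClassicalDescription Classical.
From HB Require Import structures.
From mathcomp Require Import all_boot all_order all_algebra all_field.
From mathcomp Require Import ring zify.
Set Implicit Arguments.
Unset Strict Implicit.
Unset Printing Implicit Defensive.
Import GRing.Theory.

(* For every J with |J| > k the iterates sigma^j(a_i), i in J, are algebraically
   dependent over the difference field generated by A.  On a U-large set of primes each
   element of that field is a Frobenius twist Frob^-m(s/t) of a quotient of closed terms
   s, t over A, because such twists already form a difference field containing A.  Raising
   a dependence relation to the power p^m and clearing a common denominator gives a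
   difference polynomial P_J over A, with closed-term coefficients not all zero, such that
   P_J(a) = 0.  That a closed term does not vanish is a parameter-free statement about its
   constants, so it persists in elementary extensions; there, any solution of P_J = 0 has
   transformally dependent J-coordinates.  Hence the system of all P_J with |J| > k has
   dimension at most k, and a realizes it with dimension exactly k. *)

Lemma inP (T : eqType) (x : T) s : reflect (List.In x s) (x \in s).
Proof.
elim: s => [|y s IH] /=; first by right.
rewrite in_cons; apply: (iffP orP).
- by case=> [/eqP ->|/IH]; [left|right].
- by case=> [->|/IH]; [left; rewrite eqxx|right].
Qed.

Lemma In_allpairs (S T R : Type) (f : S -> T -> R) s t y :
  List.In y [seq f i j | i <- s, j <- t] -> exists i j, y = f i j.
Proof.
elim: s => //= i s IH /List.in_app_iff [/List.in_map_iff [j [<- _]]|/IH //].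
by exists i, j.
Qed.

Lemma eq_map_In (S T : Type) (f g : S -> T) s :
  (forall x, List.In x s -> f x = g x) -> map f s = map g s.
Proof.
elim: s => //= x s IH fg; rewrite fg ?IH //; last by left.
by move=> y Hy; apply: fg; right.
Qed.

Lemma In_nth (T : Type) (x0 x : T) s :
  List.In x s -> exists2 k, k < size s & nth x0 s k = x.
Proof.
elim: s => //= y s IH [->|/IH [k lt_k <-]]; first by exists 0.
by exists k.+1.
Qed.

Lemma nth_In (T : Type) (x0 : T) s k : k < size s -> List.In (nth x0 s k) s.
Proof. by elim: s k => //= x s IH [|k] /=; [left|right; apply: IH]. Qed.

Lemma In_zip (S T : Type) (s : seq S) (t : seq T) a b :
  List.In (a, b) (zip s t) -> List.In a s /\ List.In b t.
Proof.
elim: s t => [|x s IH] [|y t] //= [[-> ->]|/IH [? ?]]; first by split; left.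
by split; right.
Qed.

Lemma map_zip1 (S S' T : Type) (f : S -> S') (s : seq S) (t : seq T) :
  [seq (f xy.1, xy.2) | xy <- zip s t] = zip (map f s) t.
Proof. by elim: s t => [|x s IH] [|y t] //=; rewrite IH. Qed.

Section Terms.
Variable X : Type.
Implicit Types (t : term X) (A : X -> Prop).

Fixpoint tclosed t : Prop :=
  match t with
  | Var _ => False
  | Add s u | Mul s u => tclosed s /\ tclosed u
  | Opp s | Sig s => tclosed s
  | _ => True
  end.

Definition closed_over A t := tcsts_in A t /\ tclosed t.

Lemma closed_overD A s u :
  closed_over A s -> closed_over A u -> closed_over A (Add s u).
Proof. by move=> [? ?] [? ?]. Qed.

Lemma closed_overM A s u :
  closed_over A s -> closed_over A u -> closed_over A (Mul s u).
Proof. by move=> [? ?] [? ?]. Qed.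

Lemma closed_over_iter_Sig A d t :
  closed_over A t -> closed_over A (iter d (@Sig X) t).
Proof. by case=> ? ?; elim: d => //= d []. Qed.

Lemma tclosed_vars n t : tclosed t -> tvars_lt n t.
Proof. by elim: t => //= [s IHs u IHu|s IHs u IHu] [/IHs ? /IHu ?]. Qed.

Definition tmonom (ys : seq (term X)) (es : seq nat) : term X :=
  foldr (fun ye acc => Mul (tpow ye.1 ye.2) acc) One (zip ys es).

Definition tpeval (ys : seq (term X)) (P : seq (term X * seq nat)) : term X :=
  foldr (fun ce acc => Add (Mul ce.1 (tmonom ys ce.2)) acc) Zero P.

Section Eval.
Variables (M : str) (cs : X -> M).

Lemma evalt_tclosed v v' t : tclosed t -> evalt cs v t = evalt cs v' t.
Proof.
by elim: t => //= [s IHs u IHu|s IHs u IHu|s IHs|s IHs]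
  => [[/IHs-> /IHu->]|[/IHs-> /IHu->]|/IHs->|/IHs->].
Qed.

Lemma evalt_iter_Sig v j t :
  evalt cs v (iter j (@Sig X) t) = iter j (@sg M) (evalt cs v t).
Proof. by elim: j => //= j ->. Qed.

Lemma evalt_tpow v y e : evalt cs v (tpow y e) = pw (evalt cs v y) e.
Proof. by elim: e => //= e ->. Qed.

Lemma evalt_tpeval v ys P :
  evalt cs v (tpeval ys P) =
  peval (map (evalt cs v) ys) [seq (evalt cs v ce.1, ce.2) | ce <- P].
Proof.
have evalt_tmonom es : evalt cs v (tmonom ys es) = monom (map (evalt cs v) ys) es.
  elim: ys es => [|y ys IH] [|e es] //=.
  by rewrite /monom /= evalt_tpow; congr (ml _ _); apply: IH.
elim: P => //= ce P IH.
by rewrite /tpeval /peval /= evalt_tmonom; congr (ad _ _); apply: IH.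
Qed.

End Eval.

Lemma tpeval_ind (Q : term X -> Prop) ys P :
  Q Zero -> Q One -> (forall s u, Q s -> Q u -> Q (Add s u)) ->
  (forall s u, Q s -> Q u -> Q (Mul s u)) ->
  (forall y, List.In y ys -> Q y) -> (forall ce, List.In ce P -> Q ce.1) ->
  Q (tpeval ys P).
Proof.
move=> Q0 Q1 QD QM Qys.
have Qmonom es : Q (tmonom ys es).
  elim: ys es Qys => [|y ys IHy] [|e es] Qys //=.
  apply: (QM); last by apply: IHy => z Hz; apply: Qys; right.
  by elim: e => //= e IHe; apply: (QM) => //; apply: Qys; left.
elim: P => //= ce P IH QP; apply: (QD); last by apply: IH => ce' H; apply: QP; right.
by apply: (QM) => //; apply: QP; left.
Qed.

Definition tsig_iterates n (J : {set 'I_n}) (N : nat) : seq (term X) :=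
  [seq iter j (@Sig X) (Var (val i)) | i <- enum J, j <- iota 0 N].

Lemma evalt_tsig_iterates (M : str) (cs : X -> M) n (c : 'I_n -> M) y J N :
  map (evalt cs (join c y)) (tsig_iterates J N) =
  [seq iter j (@sg M) (c i) | i <- enum J, j <- iota 0 N].
Proof.
rewrite /tsig_iterates map_allpairs; apply: eq_allpairs => i j /=.
by rewrite evalt_iter_Sig /= /join valK.
Qed.

Lemma tsig_iterates_vars n (J : {set 'I_n}) N y :
  List.In y (tsig_iterates J N) -> tvars_lt n y /\ forall A, tcsts_in A y.
Proof.
move=> Hy; have [i [j ->]] :=
  @In_allpairs _ _ _ (fun (i : 'I_n) j => iter j (@Sig X) (Var (val i))) _ _ _ Hy.
split; last by elim: j.
by elim: j => //=; apply: ltn_ord.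
Qed.

Fixpoint tconsts t : seq X :=
  match t with
  | Cst x => [:: x]
  | Add s u | Mul s u => tconsts s ++ tconsts u
  | Opp s | Sig s => tconsts s
  | _ => [::]
  end.

(* Replaces the constants of [t], from left to right, by the variables [k], [k+1], ...,
   so that the non-vanishing of [t] becomes a parameter-free formula. *)
Fixpoint tabstract t (k : nat) : term Empty_set :=
  match t with
  | Var _ => Zero | Cst _ => Var k | Zero => Zero | One => One
  | Add s u => Add (tabstract s k) (tabstract u (k + size (tconsts s)))
  | Mul s u => Mul (tabstract s k) (tabstract u (k + size (tconsts s)))
  | Opp s => Opp (tabstract s k)
  | Sig s => Sig (tabstract s k)
  end.

Lemma evalt_tabstract (M : str) (cs : X -> M) v w t k :
  tclosed t ->
  (forall i, i < size (tconsts t) ->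
     w (k + i) = nth (zr M) (map cs (tconsts t)) i) ->
  evalt (nocst M) w (tabstract t k) = evalt cs v t.
Proof.
have split_consts s u k' : (forall i, i < size (tconsts s ++ tconsts u) ->
      w (k' + i) = nth (zr M) (map cs (tconsts s ++ tconsts u)) i) ->
    (forall i, i < size (tconsts s) ->
       w (k' + i) = nth (zr M) (map cs (tconsts s)) i) /\
    (forall i, i < size (tconsts u) ->
       w (k' + size (tconsts s) + i) = nth (zr M) (map cs (tconsts u)) i).
  move=> H; split=> i Hi; rewrite -?addnA H ?map_cat ?nth_cat ?size_map ?size_cat.
  - by rewrite Hi.
  - by rewrite (leq_trans Hi) ?leq_addr.
  - by rewrite ltnNge leq_addr /= addKn.
  - by rewrite ltn_add2l.
elim: t k => //= [x k _ /(_ 0 isT)|s IHs u IHu k [ns nu] /split_consts []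
  |s IHs u IHu k [ns nu] /split_consts []|s IHs k ns H|s IHs k ns H].
- by rewrite addn0.
- by move=> /(IHs k ns)-> /(IHu _ nu)->.
- by move=> /(IHs k ns)-> /(IHu _ nu)->.
- by rewrite (IHs k ns).
- by rewrite (IHs k ns).
Qed.

Lemma elem_ext_evalt_neq0 (N M : str) (h : N -> M) (cs : X -> N) v v' t :
  elem_ext h -> tclosed t -> ~ eqr (evalt cs v t) (zr N) ->
  ~ eqr (evalt (fun x => h (cs x)) v' t) (zr M).
Proof.
move=> hE tc; pose w i := nth (zr N) (map cs (tconsts t)) i.
have [transfer _] := hE (FNeg (FEq (tabstract t 0) Zero)) w.
have wM i : i < size (tconsts t) ->
    h (w (0 + i)) = nth (zr M) (map (fun x => h (cs x)) (tconsts t)) i.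
  by move=> Hi; rewrite (map_comp h cs) (nth_map (zr N)) ?size_map.
rewrite -(evalt_tabstract v' (w := fun i => h (w i)) tc wM).
by rewrite -(evalt_tabstract v (w := w) (k := 0) tc).
Qed.

Lemma dsubfield_evalt (M : str) (cs : X -> M) A (S : M -> Prop) v t :
  dsubfield S -> (forall x, A x -> S (cs x)) -> closed_over A t ->
  S (evalt cs v t).
Proof.
move=> [_ [S0 [S1 [SD [SN [SM [_ [Sg _]]]]]]]] SA [].
elim: t => //= [x /SA //|s IHs u IHu [? ?] [? ?]|s IHs u IHu [? ?] [? ?]
  |s IHs ? ?|s IHs ? ?].
- by apply: SD; [apply: IHs|apply: IHu].
- by apply: SM; [apply: IHs|apply: IHu].
- by apply/SN/IHs.
- by apply/Sg/IHs.
Qed.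

Definition tpoly_over A (len : nat) (Pt : seq (term X * seq nat)) : Prop :=
  (forall ce, List.In ce Pt -> closed_over A ce.1 /\ size ce.2 = len) /\
  uniq (map snd Pt).

Lemma tpoly_root_not_tindep (N M : str) (h : N -> M) (cs : X -> N) A n
    (c : 'I_n -> M) (J : {set 'I_n}) (len : nat) Pt ce0 :
  elem_ext h -> tpoly_over A (#|J| * len) Pt ->
  List.In ce0 Pt -> ~ eqr (evalt cs (fun _ => zr N) ce0.1) (zr N) ->
  eqr (evalt (fun x => h (cs x)) (join c (fun _ => zr M))
         (tpeval (tsig_iterates J len) Pt)) (zr M) ->
  ~ tindep (dfield_gen (fun z => exists x, A x /\ z = h (cs x))) c J.
Proof.
move=> hE [HPt uniqPt] Pt_ce0 ce0_neq0 root_c indep; apply: (indep len).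
set v := join c (fun _ => zr M).
exists [seq (evalt (fun x => h (cs x)) v ce.1, ce.2) | ce <- Pt]; split.
  move=> _ /List.in_map_iff [ce [<- /HPt [coef_ce size_ce]]]; split.
    move=> S HS HB; apply: (dsubfield_evalt _ HS _ coef_ce) => x Ax.
    by apply: HB; exists x.
  by rewrite size_ce size_allpairs size_iota cardE.
split; first by rewrite -map_comp.
split.
  exists (evalt (fun x => h (cs x)) v ce0.1, ce0.2); split.
    exact: (List.in_map (fun ce => (evalt (fun x => h (cs x)) v ce.1, ce.2))).
  by apply: elem_ext_evalt_neq0 ce0_neq0 => //; case: (HPt _ Pt_ce0) => [[]].
by move: root_c; rewrite evalt_tpeval evalt_tsig_iterates.
Qed.

End Terms.

Arguments tsig_iterates {X n} J N.

(* Frob^m maps sigma^j(c_i) to sigma^(m+j)(c_i): an exponent vector on the blocks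
   (sigma^j(c_i))_(j < len) is re-indexed to the blocks (sigma^j(c_i))_(j < m + len). *)
Fixpoint pad_blocks (nb len m : nat) (e : seq nat) : seq nat :=
  if nb is nb'.+1 then nseq m 0 ++ take len e ++ pad_blocks nb' len m (drop len e)
  else [::].

Lemma size_pad_blocks nb len m e :
  size e = nb * len -> size (pad_blocks nb len m e) = nb * (m + len).
Proof.
elim: nb e => [|nb IH] e He //=.
rewrite !size_cat size_nseq IH ?size_drop ?He ?mulSn ?addKn //.
by rewrite size_takel ?He ?mulSn ?leq_addr //; lia.
Qed.

Lemma pad_blocks_inj nb len m e1 e2 :
  size e1 = nb * len -> size e2 = nb * len ->
  pad_blocks nb len m e1 = pad_blocks nb len m e2 -> e1 = e2.
Proof.
elim: nb e1 e2 => [|nb IH] e1 e2 He1 He2.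
  by move: He1 He2; rewrite mul0n => /size0nil -> /size0nil ->.
have size_take e : size e = nb.+1 * len -> size (take len e) = len.
  by move=> He; rewrite size_takel // He mulSn leq_addr.
move=> /= /eqP; rewrite eqseq_cat // => /andP [_ /eqP].
move=> /eqP; rewrite eqseq_cat ?size_take // => /andP [/eqP Ht /eqP /IH Hd].
rewrite -(cat_take_drop len e1) -(cat_take_drop len e2) Ht Hd //.
- by rewrite size_drop He1 mulSn addKn.
- by rewrite size_drop He2 mulSn addKn.
Qed.

Section Polynomials.
Local Open Scope ring_scope.

Definition mon (R : nzSemiRingType) (ys : seq R) (es : seq nat) : R :=
  foldr (fun ye acc => ye.1 ^+ ye.2 * acc) 1 (zip ys es).

Definition pev (R : nzSemiRingType) (ys : seq R) (P : seq (R * seq nat)) : R :=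
  foldr (fun ce acc => ce.1 * mon ys ce.2 + acc) 0 P.

Variable R : comNzSemiRingType.
Implicit Types (ys : seq R) (es : seq nat) (P : seq (R * seq nat)).

Lemma mon_cat ys1 ys2 es1 es2 : size ys1 = size es1 ->
  mon (ys1 ++ ys2) (es1 ++ es2) = mon ys1 es1 * mon ys2 es2.
Proof.
elim: ys1 es1 => [|y ys1 IH] [|e es1] //=; first by rewrite mul1r.
by move=> [Hs]; rewrite /mon /= -!/(mon _ _) IH // mulrA.
Qed.

Lemma mon_nseq0 ys : mon ys (nseq (size ys) 0%N) = 1.
Proof. by elim: ys => //= y ys IH; rewrite /mon /= -/(mon _ _) IH expr0 mulr1. Qed.

Lemma mon_pad_blocks (I : Type) (s : seq I) (g : I -> nat -> R) len m e :
  size e = (size s * len)%N ->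
  mon [seq g i (m + j)%N | i <- s, j <- iota 0%N len] e =
  mon [seq g i j | i <- s, j <- iota 0%N (m + len)%N] (pad_blocks (size s) len m e).
Proof.
elim: s e => [|i s IH] e He /=; first by move: He; rewrite mul0n => /size0nil ->.
have size_take : size (take len e) = len by rewrite size_takel // He mulSn leq_addr.
rewrite -{1}(cat_take_drop len e) catA.
rewrite !mon_cat ?size_map ?size_iota ?size_cat ?size_nseq ?size_take //.
rewrite -IH ?size_drop ?He ?mulSn ?addKn //; congr (_ * _).
rewrite iotaD add0n map_cat mon_cat ?size_map ?size_iota ?size_nseq //.
rewrite -[m in nseq m _](size_iota 0 m) -(size_map (g i) (iota 0 m)) mon_nseq0 mul1r.
by rewrite -{2}[m]addn0 iotaDl -map_comp.
Qed.

Lemma pev_map_exps ys ys' (f : seq nat -> seq nat) P :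
  (forall ce, List.In ce P -> mon ys ce.2 = mon ys' (f ce.2)) ->
  pev ys P = pev ys' [seq (ce.1, f ce.2) | ce <- P].
Proof.
elim: P => //= ce P IH Hmon; rewrite /pev /= -!/(pev _ _) Hmon; last by left.
by rewrite IH // => ce' Hce'; apply: Hmon; right.
Qed.

Lemma pev_mulr ys P t : pev ys P * t = pev ys [seq (ce.1 * t, ce.2) | ce <- P].
Proof.
elim: P => [|ce P IH] /=; first by rewrite mul0r.
by rewrite /pev /= -!/(pev _ _) -IH mulrDl mulrAC.
Qed.

Lemma pev_morph (S : comNzSemiRingType) (f : R -> S) ys P :
  f 0 = 0 -> f 1 = 1 -> {morph f : x y / x + y} -> {morph f : x y / x * y} ->
  f (pev ys P) = pev (map f ys) [seq (f ce.1, ce.2) | ce <- P].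
Proof.
move=> f0 f1 fD fM.
have fX x e : f (x ^+ e) = f x ^+ e by elim: e => [|e IH]; rewrite ?exprS ?fM ?IH.
have f_mon es : f (mon ys es) = mon (map f ys) es.
  elim: ys es => [|y ys IH] [|e es] //=.
  by rewrite /mon /= -!/(mon _ _) fM fX IH.
by elim: P => //= ce P IH; rewrite /pev /= -!/(pev _ _) fD fM f_mon IH.
Qed.

Lemma pev_frobenius_pad (p : nat) (I : Type) (s : seq I) (y : I -> R) len m P t :
  p \in [pchar R] -> (forall ce, List.In ce P -> size ce.2 = (size s * len)%N) ->
  pev [seq y i ^+ (p ^ j)%N | i <- s, j <- iota 0%N len] P = 0 ->
  pev [seq y i ^+ (p ^ j)%N | i <- s, j <- iota 0%N (m + len)%N]
      [seq (ce.1 ^+ (p ^ m)%N * t, pad_blocks (size s) len m ce.2) | ce <- P] = 0.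
Proof.
move=> pcharRp size_exps root_y.
have pchar_pm : [pchar R].-nat (p ^ m)%N.
  by rewrite pnatX (pnatE _ (pcharf_prime pcharRp)) pcharRp.
have pm_gt0 : (0 < p ^ m)%N by rewrite expn_gt0 prime_gt0 ?(pcharf_prime pcharRp).
have := congr1 (fun z => z ^+ (p ^ m)%N * t) root_y.
rewrite /= expr0n eqn0Ngt pm_gt0 mul0r => <-.
have frob_pev ys Q : pev ys Q ^+ (p ^ m)%N =
    pev (map (fun z => z ^+ (p ^ m)%N) ys) [seq (ce.1 ^+ (p ^ m)%N, ce.2) | ce <- Q].
  apply: pev_morph => [|||a b]; rewrite ?expr0n ?eqn0Ngt ?pm_gt0 ?expr1n //.
  - by move=> a b; rewrite exprDn_pchar.
  - by rewrite exprMn.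
rewrite frob_pev pev_mulr -map_comp map_allpairs; apply/esym.
rewrite (pev_map_exps (ys' := [seq y i ^+ (p ^ j)%N | i <- s, j <- iota 0%N (m + len)])
                      (f := pad_blocks (size s) len m)); first by rewrite -map_comp.
move=> ce /List.in_map_iff [ce' [<- /size_exps size_ce']] /=.
rewrite -mon_pad_blocks //; congr mon; apply: eq_allpairs => i j /=.
by rewrite -exprM -expnD addnC.
Qed.

End Polynomials.

Section Ultrafilter.
Variables (I : Type) (U : (I -> Prop) -> Prop).
Hypothesis HU : ultrafilter U.

Lemma uf_all (Y : I -> Prop) : (forall i, Y i) -> U Y.
Proof. by case: HU => UT [_ [Umono _]] HY; apply: Umono UT _ => i _; apply: HY. Qed.

Lemma uf_mono2 (X Y Z : I -> Prop) :
  U X -> U Y -> (forall i, X i -> Y i -> Z i) -> U Z.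
Proof.
case: HU => _ [_ [Umono [Uand _]]] UX UY HZ.
by apply: Umono (Uand _ _ UX UY) _ => i [/HZ]; apply.
Qed.

Lemma uf_mono (X Y : I -> Prop) : U X -> (forall i, X i -> Y i) -> U Y.
Proof. by move=> UX HY; apply: (uf_mono2 UX UX) => i /HY. Qed.

Lemma uf_witness (X : I -> Prop) : U X -> exists i, X i.
Proof.
case: HU => _ [Uproper _] UX; apply: NNPP => noX; apply: Uproper.
by apply: uf_mono UX _ => i Xi; apply: noX; exists i.
Qed.

Lemma uf_compl (X : I -> Prop) : ~ U X -> U (fun i => ~ X i).
Proof. by case: HU => _ [_ [_ [_ Ucompl]]] nUX; case: (Ucompl X). Qed.

Lemma uf_not (X : I -> Prop) : U (fun i => ~ X i) -> ~ U X.
Proof.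
by move=> UnX UX; case: (uf_witness (uf_mono2 UnX UX (fun i (nXi : ~ X i) => nXi))).
Qed.

End Ultrafilter.

Lemma peval_ultra (I : Type) (U : (I -> Prop) -> Prop) (M : I -> str)
    (ys : seq (ultra U M)) P i :
  peval ys P i = peval (map (fun y => y i) ys) [seq (ce.1 i, ce.2) | ce <- P].
Proof.
have pw_i (y : ultra U M) e : pw y e i = pw (y i) e by elim: e => //= e IH; rewrite -IH.
have monom_i es : monom ys es i = monom (map (fun y => y i) ys) es.
  elim: ys es => [|y ys IH] [|e es] //=.
  by rewrite /monom /= -!/(monom _ _) -IH -pw_i.
by elim: P => //= ce P IH; rewrite /peval /= -!/(peval _ _) -IH -monom_i.
Qed.

Lemma peval_ring_str (R : nzRingType) (s : R -> R) ys P :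
  peval (M := ring_str s) ys P = pev ys P.
Proof.
have pwE y e : pw (M := ring_str s) y e = (y ^+ e)%R.
  by elim: e => // e IH; rewrite exprS -IH.
have monE es : monom (M := ring_str s) ys es = mon ys es.
  elim: ys es => [|y ys IH] [|e es] //=.
  by rewrite /monom /mon /= pwE; congr (_ * _)%R; apply: IH.
elim: P => //= ce P IH; rewrite /peval /pev /=.
by congr (_ + _)%R; [rewrite -monE | exact: IH].
Qed.

Lemma iter_expr (R : nzSemiRingType) (q j : nat) (x : R) :
  iter j (fun z => z ^+ q)%R x = (x ^+ (q ^ j))%R.
Proof. by elim: j => [|j IH]; rewrite ?expr1 //= IH expnSr exprM. Qed.

Section FrobeniusUltraproduct.
Variables (U : (prime_t -> Prop) -> Prop) (Fp : prime_t -> finFieldType)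
  (Kp : prime_t -> closedFieldType) (io : forall p, {rmorphism Fp p -> Kp p})
  (A : Fstr U Fp -> Prop).
Local Open Scope ring_scope.
Hypothesis HU : ultrafilter U.
Hypothesis pchar_Kp : forall p : prime_t, sval p \in [pchar Kp p].

Local Notation X := (Fstr U Fp).
Local Notation N := (Ftstr U Kp).

Definition ev (r : term X) : N := evalt (iota_u io) (fun _ => zr N) r.

Lemma evM r r' p : ev (Mul r r') p = ev r p * ev r' p. Proof. by []. Qed.

Lemma evS r p : ev (Sig r) p = ev r p ^+ sval p. Proof. by []. Qed.

Lemma iter_sg_Ftstr j (x : N) p : iter j (@sg N) x p = x p ^+ (sval p ^ j)%N.
Proof. by rewrite -iter_expr; elim: j => //= j ->. Qed.

Lemma ev_iter_Sig j r p : ev (iter j (@Sig X) r) p = ev r p ^+ (sval p ^ j)%N.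
Proof. by rewrite /ev evalt_iter_Sig iter_sg_Ftstr. Qed.

Lemma pchar_nat_exp p m : [pchar Kp p].-nat (sval p ^ m)%N.
Proof. by rewrite pnatX (pnatE _ (pcharf_prime (pchar_Kp p))) pchar_Kp. Qed.

(* U-almost everywhere, [x = Frob^-m (s / t)] for corresponding [x] in [xs] and [s] in
   [ss]: common Frobenius exponent [m] and common denominator [t]. *)
Definition fracs_rep (m : nat) (xs : seq N) (ss : seq (term X)) (t : term X) :=
  closed_over A t /\ (forall s, List.In s ss -> closed_over A s) /\
  U (fun p => ev t p != 0 /\
     [seq x p ^+ (sval p ^ m)%N * ev t p | x <- xs] = [seq ev s p | s <- ss]).

Lemma fracs_rep_size m xs ss t : fracs_rep m xs ss t -> size ss = size xs.
Proof. by case=> _ [_ /(uf_witness HU) [p [_ /(congr1 size)]]]; rewrite !size_map. Qed.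

Lemma fracs_rep_lift d m xs ss t : fracs_rep m xs ss t ->
  fracs_rep (d + m) xs (map (iter d (@Sig X)) ss) (iter d (@Sig X) t).
Proof.
case=> t_cl [ss_cl ae]; split; first exact: closed_over_iter_Sig.
split; first by move=> _ /List.in_map_iff [s [<- /ss_cl]]; apply: closed_over_iter_Sig.
apply: (uf_mono HU ae) => p [t_neq0 Hxs]; rewrite ev_iter_Sig expf_neq0 //; split=> //.
rewrite -map_comp (eq_map (fun s => ev_iter_Sig d s p)).
rewrite (map_comp (fun z => z ^+ (sval p ^ d)%N) (ev^~ p)) -Hxs -map_comp.
by apply: eq_map => x /=; rewrite exprMn -exprM expnD mulnC.
Qed.

Lemma fracs_rep_cat m xs ss t ys ss' t' :
  fracs_rep m xs ss t -> fracs_rep m ys ss' t' ->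
  fracs_rep m (xs ++ ys) ([seq Mul s t' | s <- ss] ++ [seq Mul s' t | s' <- ss'])
    (Mul t t').
Proof.
case=> t_cl [ss_cl ae] [t'_cl [ss'_cl ae']]; split; first exact: closed_overM.
split.
  move=> _ /List.in_app_iff [] /List.in_map_iff [s [<-]].
    by move=> /ss_cl s_cl; apply: closed_overM.
  by move=> /ss'_cl s_cl; apply: closed_overM.
apply: (uf_mono2 HU ae ae') => p [t_neq0 Hxs] [t'_neq0 Hys].
split; first exact: mulf_neq0.
rewrite map_cat -!map_comp (eq_map (fun s => evM s t' p)) (eq_map (fun s => evM s t p)).
rewrite (map_comp (fun z => z * ev t' p) (ev^~ p)) -Hxs.
rewrite (map_comp (fun z => z * ev t p) (ev^~ p)) -Hys -!map_comp.
by rewrite map_cat; congr (_ ++ _); apply: eq_map => x /=; rewrite evM; ring.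
Qed.

Lemma fracs_rep_merge m xs ss t m' ys ss' t' :
  fracs_rep m xs ss t -> fracs_rep m' ys ss' t' ->
  exists m'' ss'' t'', fracs_rep m'' (xs ++ ys) ss'' t''.
Proof.
move=> /(fracs_rep_lift m') rep_xs /(fracs_rep_lift m) rep_ys.
by rewrite addnC in rep_ys; do 3!eexists; apply: fracs_rep_cat rep_xs rep_ys.
Qed.

Definition frob_frac (x : N) := exists m s t, fracs_rep m [:: x] [:: s] t.

Lemma frob_fracI x m s t : closed_over A s -> closed_over A t ->
  U (fun p => ev t p != 0 /\ x p ^+ (sval p ^ m)%N * ev t p = ev s p) ->
  frob_frac x.
Proof.
move=> s_cl t_cl ae; exists m, s, t; split=> //; split; first by move=> s' [<-|].
by apply: (uf_mono HU ae) => p [t_neq0 Hx]; rewrite /= Hx.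
Qed.

Lemma frob_frac_pair x y : frob_frac x -> frob_frac y ->
  exists m s1 s2 t, closed_over A s1 /\ closed_over A s2 /\ closed_over A t /\
  U (fun p => ev t p != 0 /\ x p ^+ (sval p ^ m)%N * ev t p = ev s1 p /\
                           y p ^+ (sval p ^ m)%N * ev t p = ev s2 p).
Proof.
move=> [m [s [t rep_x]]] [m' [s' [t' rep_y]]].
have [m'' [ss [t'' rep]]] := fracs_rep_merge rep_x rep_y.
case: ss rep (fracs_rep_size rep) => [|s1 [|s2 []]] // [t_cl [ss_cl ae]] _.
exists m'', s1, s2, t''; split; first by apply: ss_cl; left.
split; first by apply: ss_cl; right; left.
split=> //.
by apply: (uf_mono HU ae) => p [t_neq0 /= [-> ->]].
Qed.

Lemma frob_frac_const (r : term X) : closed_over A r -> frob_frac (ev r).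
Proof.
move=> r_cl; apply: (frob_fracI (m := 0) r_cl (t := One)) => //.
by apply: uf_all => // p; rewrite expr1 mulr1 oner_neq0.
Qed.

Lemma frob_frac_add x y : frob_frac x -> frob_frac y -> frob_frac (ad x y).
Proof.
move=> /frob_frac_pair /[apply] [[m [s1 [s2 [t [s1_cl [s2_cl [t_cl ae]]]]]]]].
apply: (frob_fracI (m := m) (closed_overD s1_cl s2_cl) t_cl).
apply: (uf_mono HU ae) => p [t_neq0 [Hx Hy]]; split=> //.
by rewrite /= exprDn_pchar ?pchar_nat_exp // mulrDl Hx Hy.
Qed.

Lemma frob_frac_mul x y : frob_frac x -> frob_frac y -> frob_frac (ml x y).
Proof.
move=> /frob_frac_pair /[apply] [[m [s1 [s2 [t [s1_cl [s2_cl [t_cl ae]]]]]]]].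
apply: (frob_fracI (m := m) (closed_overM s1_cl s2_cl) (closed_overM t_cl t_cl)).
apply: (uf_mono HU ae) => p [t_neq0 [Hx Hy]]; split; first exact: mulf_neq0.
by rewrite !evM -Hx -Hy exprMn; ring.
Qed.

Lemma frob_frac_opp x : frob_frac x -> frob_frac (op x).
Proof.
move=> [m [s [t [t_cl [ss_cl ae]]]]].
apply: (frob_fracI (m := m) (s := Opp s) (ss_cl s (or_introl erefl)) t_cl).
apply: (uf_mono HU ae) => p [t_neq0 [Hx]]; split=> //.
by rewrite /= exprNn_pchar ?pchar_nat_exp // mulNr Hx.
Qed.

Lemma frob_frac_inv x y :
  frob_frac x -> ~ eqr x (zr N) -> eqr (ml x y) (on N) -> frob_frac y.
Proof.
move=> [m [s [t [t_cl [ss_cl ae]]]]] /(uf_compl HU) x_neq0 xy1.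
apply: (frob_fracI (m := m) t_cl (ss_cl s (or_introl erefl))).
have ae' := uf_mono2 HU ae x_neq0 (fun p e ne => conj e ne).
apply: (uf_mono2 HU ae' xy1) => p [[t_neq0 [Hx]] /eqP xp_neq0] /= xy1p.
rewrite -Hx mulf_neq0 ?expf_neq0 //; split=> //.
by rewrite mulrA -exprMn [y p * _]mulrC xy1p expr1n mul1r.
Qed.

Lemma frob_frac_sg x : frob_frac x -> frob_frac (sg x).
Proof.
move=> [m [s [t [[t_cst t_cl] [ss_cl ae]]]]].
have [s_cst s_cl] := ss_cl s (or_introl erefl).
apply: (frob_fracI (m := m) (s := Sig s) (t := Sig t)) => //.
apply: (uf_mono HU ae) => p [t_neq0 [Hx]]; split; first by rewrite evS expf_neq0.
by rewrite !evS -Hx exprMn -!exprM mulnC.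
Qed.

Lemma frob_frac_sg_inv x y : frob_frac x -> eqr (sg y) x -> frob_frac y.
Proof.
move=> [m [s [t [t_cl [ss_cl ae]]]]] yx.
apply: (frob_fracI (m := m.+1) (ss_cl s (or_introl erefl)) t_cl).
apply: (uf_mono2 HU ae yx) => p [t_neq0 [Hx]] /= yxp; split=> //.
by rewrite expnS exprM yxp.
Qed.

Lemma frob_frac_eqr x y : eqr x y -> frob_frac x -> frob_frac y.
Proof.
move=> xy [m [s [t [t_cl [ss_cl ae]]]]].
apply: (frob_fracI (m := m) (ss_cl s (or_introl erefl)) t_cl).
by apply: (uf_mono2 HU ae xy) => p [t_neq0 [Hx]] /= <-.
Qed.

Lemma dsubfield_frob_frac : dsubfield frob_frac.
Proof.
do !split.
- exact: frob_frac_eqr.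
- exact: (frob_frac_const (r := Zero)).
- exact: (frob_frac_const (r := One)).
- exact: frob_frac_add.
- exact: frob_frac_opp.
- exact: frob_frac_mul.
- exact: frob_frac_inv.
- exact: frob_frac_sg.
- exact: frob_frac_sg_inv.
Qed.

Lemma frob_frac_dfield_gen x :
  dfield_gen (fun z => exists x, A x /\ z = iota_u io x) x -> frob_frac x.
Proof.
apply; first exact: dsubfield_frob_frac.
by move=> _ [y [Ay ->]]; apply: (frob_frac_const (r := Cst y)).
Qed.

Lemma fracs_rep_of_seq xs : (forall x, List.In x xs -> frob_frac x) ->
  exists m ss t, fracs_rep m xs ss t.
Proof.
elim: xs => [|x xs IH] Fxs.
  exists 0, [::], One; do 2!split=> //.
  by apply: uf_all => // p; rewrite oner_neq0.
have [m [s [t rep_x]]] := Fxs x (or_introl erefl).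
have [m' [ss [t' rep_xs]]] := IH (fun y Hy => Fxs y (or_intror Hy)).
exact: fracs_rep_merge rep_x rep_xs.
Qed.

Lemma peval_sg_iterates n (c : 'I_n -> N) (J : {set 'I_n}) len P p :
  peval [seq iter j (@sg N) (c i) | i <- enum J, j <- iota 0 len] P p =
  pev [seq c i p ^+ (sval p ^ j)%N | i <- enum J, j <- iota 0 len]
      [seq (ce.1 p, ce.2) | ce <- P].
Proof.
rewrite peval_ultra peval_ring_str map_allpairs; congr pev; apply: eq_allpairs => i j /=.
exact: iter_sg_Ftstr.
Qed.

Lemma fracs_rep_root n (c : 'I_n -> N) (J : {set 'I_n}) len m P ss t :
  (forall ce, List.In ce P -> size ce.2 = (size (enum J) * len)%N) ->
  fracs_rep m (map fst P) ss t ->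
  eqr (peval [seq iter j (@sg N) (c i) | i <- enum J, j <- iota 0 len] P) (zr N) ->
  eqr (evalt (iota_u io) (join c (fun _ => zr N))
        (tpeval (tsig_iterates J (m + len))
          (zip ss [seq pad_blocks (size (enum J)) len m ce.2 | ce <- P]))) (zr N).
Proof.
move=> size_exps [_ [ss_cl ae]] root.
apply: (uf_mono2 HU root ae) => p; rewrite peval_sg_iterates => root_p [_ Hxs].
rewrite /= evalt_tpeval evalt_tsig_iterates peval_sg_iterates -map_comp.
rewrite (eq_map_In (g := fun ce => (ev ce.1 p, ce.2))); last first.
  move=> [s e] Hse; have [s_ss _] := In_zip Hse; have [_ s_cl] := ss_cl s s_ss.
  by rewrite /= (evalt_tclosed _ _ (fun _ => zr N) s_cl).
rewrite (map_zip1 (ev^~ p)) -Hxs -map_comp zip_map.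
have := pev_frobenius_pad m (ev t p) (pchar_Kp p) _ root_p; rewrite -map_comp; apply.
by move=> _ /List.in_map_iff [ce [<- /size_exps]].
Qed.

Lemma alg_dep_tpoly n (c : 'I_n -> N) (J : {set 'I_n}) len :
  alg_dep (dfield_gen (fun z => exists x, A x /\ z = iota_u io x))
    [seq iter j (@sg N) (c i) | i <- enum J, j <- iota 0 len] ->
  exists len' Pt ce0, tpoly_over A (#|J| * len') Pt /\ List.In ce0 Pt /\
    ~ eqr (ev ce0.1) (zr N) /\
    eqr (evalt (iota_u io) (join c (fun _ => zr N)) (tpeval (tsig_iterates J len') Pt))
        (zr N).
Proof.
move=> [P [HP [uniqP [[ce0 [P_ce0 ce0_neq0]] root]]]].
have size_exps ce : List.In ce P -> size ce.2 = (size (enum J) * len)%N.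
  by move=> /HP [_ ->]; rewrite size_allpairs size_iota.
have [m [ss [t rep]]] : exists m ss t, fracs_rep m (map fst P) ss t.
  apply: fracs_rep_of_seq => _ /List.in_map_iff [ce [<- /HP [gen_ce _]]].
  exact: frob_frac_dfield_gen.
have := fracs_rep_root size_exps rep root.
have size_ss := fracs_rep_size rep; rewrite size_map in size_ss.
case: rep => t_cl [ss_cl ae].
set pad := pad_blocks (size (enum J)) len m => root_c.
have size_pads : size [seq pad ce.2 | ce <- P] = size ss by rewrite size_map.
have [k lt_k P_k] := In_nth (zr N, [::]) P_ce0.
exists (m + len), (zip ss [seq pad ce.2 | ce <- P]), (nth Zero ss k, pad ce0.2).
split; [split|split; [|split=> //]].
- move=> [s e] Hse; have [s_ss e_pads] := In_zip Hse.
  have [ce [<- /size_exps size_ce]] := proj1 (List.in_map_iff _ _ _) e_pads.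
  by split; [exact: ss_cl | rewrite cardE size_pad_blocks].
- rewrite -/(unzip2 _) unzip2_zip ?size_pads // (map_comp pad snd) map_inj_in_uniq //.
  move=> e1 e2 /inP/List.in_map_iff [ce1 [<- /size_exps ?]].
  by move=> /inP/List.in_map_iff [ce2 [<- /size_exps ?]]; apply: pad_blocks_inj.
- have -> : (nth Zero ss k, pad ce0.2) =
             nth (Zero, [::]) (zip ss [seq pad ce.2 | ce <- P]) k.
    by rewrite nth_zip ?size_pads // (nth_map (zr N, [::])) ?P_k.
  by apply: nth_In; rewrite size1_zip ?size_pads ?size_ss.
apply: (uf_not HU); apply: (uf_mono2 HU ae (uf_compl HU ce0_neq0)) => p [t_neq0 Hxs] ce0p.
have := congr1 (fun l => nth 0 l k) Hxs.
rewrite /= (nth_map Zero) ?size_ss // (nth_map (zr N)) ?size_map //.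
rewrite (nth_map (zr N, [::])) // P_k => <-.
by apply/eqP; rewrite mulf_neq0 // expf_neq0 //; apply/eqP.
Qed.

Definition forces_dep n (J : {set 'I_n}) (P : term X) : Prop :=
  forall (M : str) (h : N -> M) (c : 'I_n -> M), elem_ext h ->
    eqr (evalt (fun x => h (iota_u io x)) (join c (fun _ => zr M)) P) (zr M) ->
    ~ tindep (dfield_gen (fun z => exists x, A x /\ z = h (iota_u io x))) c J.

Lemma not_tindep_forcing_term n (c : 'I_n -> N) (J : {set 'I_n}) :
  ~ tindep (dfield_gen (fun z => exists x, A x /\ z = iota_u io x)) c J ->
  exists P : term X, tcsts_in A P /\ tvars_lt n P /\
    eqr (evalt (iota_u io) (join c (fun _ => zr N)) P) (zr N) /\ forces_dep J P.
Proof.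
move=> /not_all_ex_not [len /NNPP dep].
have [len' [Pt [ce0 [poly [Pt_ce0 [ce0_neq0 root]]]]]] := alg_dep_tpoly dep.
have [coefs _] := poly.
exists (tpeval (tsig_iterates J len') Pt); split; [|split; [|split=> //]].
- by apply: tpeval_ind => // [y /tsig_iterates_vars [_ //]|ce /coefs [[]]].
- apply: tpeval_ind => // [y /tsig_iterates_vars [] //|ce /coefs [[_]] cl _].
  exact: tclosed_vars.
- by move=> M h c' hE; apply: tpoly_root_not_tindep hE poly Pt_ce0 ce0_neq0.
Qed.

Lemma forcing_terms n (c : 'I_n -> N) (k : nat) :
  (forall J : {set 'I_n},
     tindep (dfield_gen (fun z => exists x, A x /\ z = iota_u io x)) c J ->
     (#|J| <= k)%N) ->
  exists Ps : list (term X),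
    (forall P, List.In P Ps -> tcsts_in A P /\ tvars_lt n P /\
       eqr (evalt (iota_u io) (join c (fun _ => zr N)) P) (zr N)) /\
    (forall J : {set 'I_n}, (k < #|J|)%N -> exists2 P, List.In P Ps & forces_dep J P).
Proof.
move=> trdeg_le_k.
have /fin_all_exists [f Hf] : forall J : {set 'I_n}, exists P : term X,
    [/\ tcsts_in A P, tvars_lt n P,
       eqr (evalt (iota_u io) (join c (fun _ => zr N)) P) (zr N)
     & (k < #|J|)%N -> forces_dep J P].
  move=> J; case: (ltnP k #|J|) => [k_lt_J|J_le_k].
    have [|P [? [? [? ?]]]] := @not_tindep_forcing_term n c J; last by exists P.
    by move=> /trdeg_le_k; rewrite leqNgt k_lt_J.
  by exists Zero; split=> //; apply: uf_all.
exists (map f (enum {set 'I_n})); split.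
  by move=> _ /List.in_map_iff [J [<- _]]; case: (Hf J).
move=> J k_lt_J; exists (f J); last by case: (Hf J) => _ _ _; apply.
by apply: List.in_map; apply/inP; rewrite mem_enum.
Qed.

End FrobeniusUltraproduct.

Lemma pchar_alg_closure_Fp (K : closedFieldType) p :
  prime p -> alg_closure_Fp K p -> p \in [pchar K]%R.
Proof. by move=> p_pr [pK0 _]; apply/andP. Qed.

Lemma evalt_iota_u (U : (prime_t -> Prop) -> Prop) (Fp : prime_t -> finFieldType)
    (Kp : prime_t -> closedFieldType) (io : forall p, {rmorphism Fp p -> Kp p})
    n (a : 'I_n -> Fstr U Fp) (t : term (Fstr U Fp)) p :
  evalt (M := Ftstr U Kp) (iota_u io)
    (join (fun i => iota_u io (a i)) (fun _ => zr _)) t p =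
  io p (evalt (M := Fstr U Fp) (fun x => x) (join a (fun _ => zr _)) t p).
Proof.
elim: t => /= [i|x|||s -> u ->|s -> u ->|s ->|s ->].
all: rewrite ?rmorph0 ?rmorph1 ?rmorphD ?rmorphM ?rmorphN ?rmorphXn //.
by rewrite /join; case: (insub i) => [j|] //=; rewrite rmorph0.
Qed.

Theorem lemma3p11
  (U : (prime_t -> Prop) -> Prop) (k : prime_t -> nat)
  (Fp : prime_t -> finFieldType) (Kp : prime_t -> closedFieldType)
  (iota : forall p, {rmorphism Fp p -> Kp p})
  (C : form0 -> nat -> R) (D : form0 -> nat -> list (nat * R)) :
  ultrafilter U -> nonprincipal U -> CDM C D ->
  (forall p, f_bound C D (proj1_sig p) (k p)) ->
  (forall p, #|Fp p| = (proj1_sig p ^ k p)%N) ->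
  (forall p, alg_closure_Fp (Kp p) (proj1_sig p)) ->
  forall (n : nat) (a : 'I_n -> Fstr U Fp) (A : Fstr U Fp -> Prop) (kk : nat),
    is_trdeg (fun z => exists x, A x /\ z = iota_u iota x)
             (fun i => iota_u iota (a i)) kk ->
    exists Ps : list (term (Fstr U Fp)),
      (forall P, List.In P Ps -> tcsts_in A P /\ tvars_lt n P) /\
      realizes (fun x => x) Ps a /\
      dim_rk_eq (iota_u iota) A n Ps kk.
Proof.
move=> HU _ _ _ _ Kp_alg n a A kk trdeg_a.
have pchar_Kp p : (sval p \in [pchar Kp p])%R.
  exact: pchar_alg_closure_Fp (proj2_sig p) (Kp_alg p).
have [Ps [Ps_ok Ps_forces]] := forcing_terms HU pchar_Kp (proj2 trdeg_a).
exists Ps; split; first by move=> P /Ps_ok [? [? _]].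
split.
  move=> P /Ps_ok [_ [_ root]]; apply: (uf_mono HU root) => p /=.
  by rewrite evalt_iota_u => /eqP; rewrite fmorph_eq0 => /eqP.
split.
  exists (Ftstr U Kp), id, (fun i => iota_u iota (a i)); split=> //.
  by split=> // P /Ps_ok [_ []].
move=> M h c hE realized J indep; rewrite leqNgt; apply/negP.
by move=> /Ps_forces [P Ps_P]; apply=> //; apply: realized.
Qed.
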